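(* Let $n\geq 3$, $y_1,\dots,y_n\in\mathbb{R}$, and let $r\in\{2,\dots,n\}$. Then $$-(n-2)y_1^2-(n-1)\sum_{\substack{1\leq i\leq n\\ i\neq 1,r}}y_i^2+(n-2)\sum_{i=2}^n y_1y_i+(n-1)\sum_{2\leq i<j\leq n}y_iy_j\leq \frac{(3n-1)(n-2)}{2(3n+5)}\Big(\sum_{i=1}^n y_i\Big)^2,$$ with equality if and only if $y_i=\frac32 y_1$ for all $i\in\{2,\dots,n\}\setminus\{r\}$ and $y_r=\frac92 y_1$. *)

From HB Require Import structures.
From mathcomp Require Import all_boot all_order all_algebra.
Set Implicit Arguments. Unset Strict Implicit. Unset Printing Implicit Defensive.

(* Only y_1, y_r, and the sum T and the sum of squares P of the remaining n - 2
   variables enter the inequality.  Since P >= T^2/(n-2), with equality iff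
   those variables are all equal, it suffices to bound a quadratic form in
   (y_1, T, y_r, P); its gap to the bound is an explicit sum of squares,
   3/2 (n-1) (P - T^2/(n-2)) plus a positive definite form in the deviations
   of T/(n-2) from 3/2 y_1 and of y_r from 9/2 y_1. *)
From HB Require Import structures.
From mathcomp Require Import all_boot all_order all_algebra.
From mathcomp Require Import ring lra zify.
Set Implicit Arguments. Unset Strict Implicit. Unset Printing Implicit Defensive.
Import Order.TTheory GRing.Theory Num.Theory.
Local Open Scope ring_scope.

Lemma sqr_sum_pairs (R : comPzRingType) (n : nat) (P : pred 'I_n) (f : 'I_n -> R) :
  (\sum_(i | P i) f i) ^+ 2 = \sum_(i | P i) f i ^+ 2
     + 2 * \sum_(i | P i) \sum_(j | P j && (i < j)%N) f i * f j.
Proof.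
pose lower := \sum_(i | P i) \sum_(j | P j && (j < i)%N) f i * f j.
pose upper := \sum_(i | P i) \sum_(j | P j && (i < j)%N) f i * f j.
have row_split i : P i -> f i * \sum_(j | P j) f j =
    \sum_(j | P j && (i < j)%N) f i * f j + f i ^+ 2
    + \sum_(j | P j && (j < i)%N) f i * f j.
  move=> Pi; rewrite big_distrr (bigID (fun j : 'I_n => (i < j)%N)) /= -addrA.
  congr (_ + _); rewrite (bigD1 i) /=; last by rewrite Pi ltnn.
  congr (_ + _); apply: eq_bigl => j.
  by case: (P j) => //=; rewrite -leqNgt ltn_neqAle andbC.
have lower_upper : lower = upper.
  rewrite /lower (exchange_big_dep P) /=; last by move=> i j _ /andP[].
  apply: eq_bigr => j Pj; apply: eq_big => [i|i _]; last by rewrite mulrC.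
  by rewrite Pj.
rewrite expr2 big_distrl /= (eq_bigr _ row_split) !big_split /= -/lower -/upper.
by rewrite lower_upper; ring.
Qed.

Section SumSquares.
Variables (F : realFieldType) (I : finType) (P : pred I) (f : I -> F).
Let m : F := #|P|%:R.
Let S := \sum_(i | P i) f i.

Lemma sum_sqr_sub_mean : (0 < #|P|)%N ->
  \sum_(i | P i) (f i - S / m) ^+ 2 = \sum_(i | P i) f i ^+ 2 - S ^+ 2 / m.
Proof.
move=> P_gt0; have m_neq0 : m != 0 by rewrite pnatr_eq0 -lt0n.
under eq_bigr do rewrite sqrrB.
rewrite big_split /= sumrB sumrMnl -mulr_suml -/S.
have -> : \sum_(i | P i) (S / m) ^+ 2 = (S / m) ^+ 2 * m.
  by rewrite (eq_bigl (mem P)) // sumr_const mulr_natr.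
by field.
Qed.

Lemma sum_sqr_mean_le : (0 < #|P|)%N -> S ^+ 2 / m <= \sum_(i | P i) f i ^+ 2.
Proof.
move=> P_gt0; rewrite -subr_ge0 -sum_sqr_sub_mean //.
by apply: sumr_ge0 => i _; apply: sqr_ge0.
Qed.

Lemma sum_sqr_mean_eq_const (c : F) : (0 < #|P|)%N ->
  (\sum_(i | P i) f i ^+ 2 = S ^+ 2 / m /\ S / m = c) <->
  (forall i, P i -> f i = c).
Proof.
move=> P_gt0; have m_neq0 : m != 0 by rewrite pnatr_eq0 -lt0n.
split=> [[sq_eq <-] i Pi | f_const].
  move/eqP: sq_eq; rewrite -subr_eq0 -sum_sqr_sub_mean // psumr_eq0; last first.
    by move=> j _; apply: sqr_ge0.
  by move=> /allP /(_ i (mem_index_enum _)); rewrite Pi sqrf_eq0 subr_eq0 => /eqP.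
have S_def : S = c * m.
  by rewrite /S (eq_bigr (fun=> c)) // (eq_bigl (mem P)) // sumr_const mulr_natr.
have -> : \sum_(i | P i) f i ^+ 2 = c ^+ 2 * m.
  rewrite (eq_bigr (fun=> c ^+ 2)) => [|i /f_const -> //].
  by rewrite (eq_bigl (mem P)) // sumr_const mulr_natr.
by rewrite S_def; split; field.
Qed.
End SumSquares.

Definition bound_coef (R : numFieldType) (N : R) : R :=
  (3 * N - 1) * (N - 2) / (2 * (3 * N + 5)).

(* The objective with a = y_1, w = y_r, and T, P the sum and the sum of squares
   of the other y_i; N is n. *)
Definition reduced_form (R : numFieldType) (N a T w P : R) : R :=
  - (N - 2) * a ^+ 2 - (N - 1) * P + (N - 2) * (a * (T + w))
  + (N - 1) * (((T + w) ^+ 2 - (P + w ^+ 2)) / 2).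

Lemma bound_coef_gt0 (R : realFieldType) (N : R) : 3 <= N -> 0 < bound_coef N.
Proof. by move=> N_ge3; apply: divr_gt0; [apply: mulr_gt0|]; lra. Qed.

Lemma reduced_gap_sos (R : realFieldType) (N a T w P : R) : 3 <= N ->
  let c := bound_coef N in
  let p := 2 * T / (N - 2) - 3 * a in
  let q := 2 * w - 9 * a in
  c * (a + T + w) ^+ 2 - reduced_form N a T w P
  = 3 / 2 * (N - 1) * (P - T ^+ 2 / (N - 2))
    + ((c * q + (c * (N - 2) - (N - 1) * (N - 2) / 2) * p) ^+ 2
       + (N - 1) * (N - 2) ^+ 2 / (3 * N + 5) * p ^+ 2) / (4 * c).
Proof.
move=> N_ge3 c p q; rewrite /c /p /q /bound_coef /reduced_form; field.
by rewrite !gt_eqF //; lra.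
Qed.

Lemma reduced_form_le (R : realFieldType) (N a T w P : R) :
  3 <= N -> T ^+ 2 / (N - 2) <= P ->
  reduced_form N a T w P <= bound_coef N * (a + T + w) ^+ 2 /\
  (reduced_form N a T w P = bound_coef N * (a + T + w) ^+ 2 <->
   [/\ P = T ^+ 2 / (N - 2), T / (N - 2) = 3 / 2 * a & w = 9 / 2 * a]).
Proof.
move=> N_ge3 var_ge0; have /= gap := reduced_gap_sos a T w P N_ge3.
set c := bound_coef N in gap *; set p := _ - 3 * a in gap.
set q := _ - 9 * a in gap; set U := c * q + _ * p in gap.
set V := (N - 1) * _ / _ in gap; set X := P - _ in gap.
have c_gt0 : 0 < c := bound_coef_gt0 N_ge3.
have V_gt0 : 0 < V.
  by apply: divr_gt0; [apply: mulr_gt0; [|apply: exprn_gt0]|]; lra.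
have k_gt0 : 0 < 3 / 2 * (N - 1) by lra.
have X_ge0 : 0 <= X by rewrite subr_ge0.
have U_ge0 := sqr_ge0 U; have Vp_ge0 : 0 <= V * p ^+ 2.
  by apply: mulr_ge0; [lra | apply: sqr_ge0].
have sqr_term : 0 <= (U ^+ 2 + V * p ^+ 2) / (4 * c).
  by apply: divr_ge0; lra.
have X_term : 0 <= 3 / 2 * (N - 1) * X by apply: mulr_ge0; lra.
split; first lra.
split=> [eq0 | [P_eq mean_eq w_eq]].
- have X0 : X = 0.
    have /eqP : 3 / 2 * (N - 1) * X = 0 by lra.
    by rewrite mulf_eq0 (gt_eqF k_gt0) => /eqP.
  have : (U ^+ 2 + V * p ^+ 2) / (4 * c) = 0 by lra.
  have c4_gt0 : 0 < 4 * c by lra.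
  move=> /eqP; rewrite mulf_eq0 invr_eq0 (gt_eqF c4_gt0) orbF.
  move/eqP=> sum_sqr0; have /eqP : U ^+ 2 = 0 by lra.
  have /eqP : V * p ^+ 2 = 0 by lra.
  rewrite mulf_eq0 (gt_eqF V_gt0) sqrf_eq0 /= => /eqP p0.
  rewrite sqrf_eq0 /U p0 mulr0 addr0 mulf_eq0 (gt_eqF c_gt0) /= => /eqP q0.
  split; [by move: X0; rewrite /X; lra | | by move: q0; rewrite /q; lra].
  by move: p0; rewrite /p -mulrA; lra.
- have X0 : X = 0 by rewrite /X P_eq subrr.
  have p0 : p = 0 by rewrite /p -mulrA mean_eq; lra.
  have q0 : q = 0 by rewrite /q w_eq; lra.
  apply/eqP; rewrite eq_sym -subr_eq0 gap X0 /U p0 q0.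
  by rewrite !(mulr0, addr0, expr0n, mul0r).
Qed.

Section SplitOffTwoIndices.
Variables (R : numFieldType) (n : nat) (y : 'I_n -> R) (i0 r : 'I_n).
Hypothesis r_neq_i0 : r != i0.

Let others (i : 'I_n) := (i != i0) && (i != r).
Let T := \sum_(i | others i) y i.
Let P := \sum_(i | others i) y i ^+ 2.

Lemma sum_neq_split (f : 'I_n -> R) :
  \sum_(i < n | i != i0) f i = \sum_(i | others i) f i + f r.
Proof. by rewrite (bigD1 r) //= addrC. Qed.

Lemma sum_ord_split : \sum_(i < n) y i = y i0 + T + y r.
Proof. by rewrite (bigD1 i0) //= sum_neq_split addrA. Qed.

Lemma card_others : #|others| = n.-2.
Proof.
have total : (\sum_(i < n) 1)%N = n by rewrite sum1_card card_ord.
rewrite (bigD1 i0) //= (bigD1 r) //= in total.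
by rewrite -[n in RHS]total !add1n -sum1_card.
Qed.

Lemma cross_sum_split :
  \sum_(i < n | i != i0) \sum_(j < n | (i0 != j) && (i < j)%N) y i * y j
  = ((T + y r) ^+ 2 - (P + y r ^+ 2)) / 2.
Proof.
rewrite (eq_bigr (fun i : 'I_n => \sum_(j | (j != i0) && (i < j)%N) y i * y j)).
  by rewrite /T /P -!sum_neq_split sqr_sum_pairs addrC addKr mulrC mulKf ?pnatr_eq0.
by move=> i _; apply: eq_bigl => j; rewrite eq_sym.
Qed.

Lemma objective_reduced : (2 <= n)%N ->
  - (n - 2)%:R * y i0 ^+ 2 - (n - 1)%:R * P
  + (n - 2)%:R * (\sum_(i < n | i != i0) y i0 * y i)
  + (n - 1)%:R * (\sum_(i < n | i != i0)
                    \sum_(j < n | (i0 != j) && (i < j)%N) y i * y j)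
  = reduced_form n%:R (y i0) T (y r) P.
Proof.
move=> n_ge2; rewrite -mulr_sumr sum_neq_split cross_sum_split /reduced_form.
by rewrite !natrB //; apply: leq_trans n_ge2.
Qed.

Lemma bound_reduced : (2 <= n)%N ->
  ((3 * n - 1) * (n - 2))%:R / (2 * (3 * n + 5))%:R * (\sum_(i < n) y i) ^+ 2
  = bound_coef n%:R * (y i0 + T + y r) ^+ 2.
Proof.
move=> n_ge2; rewrite sum_ord_split /bound_coef; congr (_ / _ * _).
  by rewrite natrM !natrB ?natrM //; lia.
by rewrite natrM natrD natrM.
Qed.

End SplitOffTwoIndices.

Theorem mainTheorem7 (R : realFieldType) (n : nat) (hn : (3 <= n)%N)
  (y : 'I_n -> R) (i0 : 'I_n) (hi0 : nat_of_ord i0 = 0%N)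
  (r : 'I_n) (hr : r != i0) :
  let LHS :=
    - (n - 2)%:R * y i0 ^+ 2
    - (n - 1)%:R * (\sum_(i < n | (i != i0) && (i != r)) y i ^+ 2)
    + (n - 2)%:R * (\sum_(i < n | i != i0) y i0 * y i)
    + (n - 1)%:R * (\sum_(i < n | i != i0) \sum_(j < n | (i0 != j) && (i < j)%N) y i * y j) in
  let RHS := ((3 * n - 1) * (n - 2))%:R / (2 * (3 * n + 5))%:R * (\sum_(i < n) y i) ^+ 2 in
  LHS <= RHS /\
  (LHS = RHS <->
     ((forall i : 'I_n, i != i0 -> i != r -> y i = 3%:R / 2%:R * y i0) /\
      y r = 9%:R / 2%:R * y i0)).
Proof.
move=> LHS RHS; have n_ge2 : (2 <= n)%N by apply: ltnW.
rewrite /LHS /RHS (objective_reduced y hr n_ge2) (bound_reduced y hr n_ge2).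
pose others (i : 'I_n) := (i != i0) && (i != r).
have others_gt0 : (0 < #|others|)%N by rewrite card_others //; lia.
have card_others_R : #|others|%:R = n%:R - 2 :> R.
  by rewrite card_others // -subn2 natrB.
have N_ge3 : 3 <= n%:R :> R by rewrite (ler_nat R 3 n).
have := sum_sqr_mean_le y others_gt0; rewrite card_others_R => var_ge0.
have [-> ->] := reduced_form_le (y i0) (y r) N_ge3 var_ge0.
split=> //; rewrite -card_others_R.
have := sum_sqr_mean_eq_const y (3 / 2 * y i0) others_gt0.
move=> [to_const of_const]; split=> [[P_eq mean_eq ->] | [all_const ->]].
  split=> // i i_neq_i0 i_neq_r; apply: (to_const (conj P_eq mean_eq)).
  by apply/andP.
have all_others i : others i -> y i = 3 / 2 * y i0.
  by move=> /andP[]; apply: all_const.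
by have [P_eq mean_eq] := of_const all_others.
Qed.
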